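(* All on-site potentials of the tridiagonalized chain unitarily mapped from any chiral-symmetric system are zero for any chosen anchor site.
   Context: A chiral-symmetric system is one with a Hermitian Hamiltonian matrix $H$ (of even dimension $n$) for which there exists a position basis, split into two sublattices $A$ and $B$, such that $\Gamma H = -H\Gamma$ with $\Gamma = I_{(n/2)\times(n/2)}\otimes\sigma_z$ ($\sigma_z$ the Pauli matrix); the system may be nonlocal or higher-dimensional. The system is mapped onto a 1D chain with only nearest-neighbor couplings by an ''improved Householder'' tridiagonalization: one chooses an anchor site $m$ (any site of the original system), exchanges the first and $m$-th rows and the corresponding columns of $H$ via a permutation matrix $\bar V$, and then applies the standard Householder tridiagonalization (starting from the first row and column) to $\bar V^{\dagger}H\bar V$, giving a unitary $V^{*}$ with $V^{*}_{11}=1$ and a tridiagonal matrix $H^{*}_{\mathrm{eff}} = V^{*\dagger}(\bar V^{\dagger}H\bar V)V^{*}$, whose subdiagonal entries are made real and positive by elementary sign changes (diagonal entries unchanged). The overall map is unitary, $H_{\mathrm{eff}} = (\bar V V^{*})^{\dagger} H (\bar V V^{*})$, and the dynamics of the anchor site is faithfully mapped to the first site of the new chain. The on-site potentials of the tridiagonalized chain are the diagonal entries of the tridiagonal Hamiltonian. The nontrivial case in which the tridiagonalized matrix has nonzero subdiagonal elements is considered. *)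

(* Complex scalars: an arbitrary numClosedFieldType C
   (e.g. complex R = R[i] for R a realType, or algC). Indices are 0-based. *)
From HB Require Import structures.
From mathcomp Require Import all_boot all_order all_algebra.
Set Implicit Arguments. Unset Strict Implicit. Unset Printing Implicit Defensive.
Import Order.TTheory GRing.Theory Num.Theory.
Local Open Scope ring_scope.

Section Chiral.
Variable C : numClosedFieldType.

Definition adjmx {m n : nat} (A : 'M[C]_(m, n)) : 'M[C]_(n, m) :=
  (map_mx (@Num.conj C) A)^T.

Definition is_hermitian {n : nat} (H : 'M[C]_n) : Prop := adjmx H = H.

(* Gamma = I_(n/2) (x) sigma_z = diag(1,-1,1,-1,...) (0-based: (-1)^i) *)
Definition gamma (n : nat) : 'M[C]_n :=
  \matrix_(i, j) ((i == j)%:R * (-1) ^+ i).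

Definition chiral {n : nat} (H : 'M[C]_n) : Prop :=
  gamma n *m H = - (H *m gamma n).

(* permutation matrix exchanging site 0 (the "first" site) and site m *)
Definition Vbar {n : nat} (m : 'I_n) : 'M[C]_n :=
  \matrix_(i, j) (if val i == 0%N then (j == m)%:R
                  else if i == m then (val j == 0%N)%:R
                  else (i == j)%:R).

Definition phase (z : C) : C := if z == 0 then 1 else z / `|z|.

(* Householder vector for step j: it acts on rows j+1..n-1 of column j.
   x = A[j+1.., j], alpha = - phase(x_0) ||x||, w = x - alpha e_(j+1). *)
Definition hh_vec {n : nat} (A : 'M[C]_n) (j : 'I_n) : 'cV[C]_n :=
  let s := sqrtC (\sum_(i : 'I_n | (j < i)%N) `|A i j| ^+ 2) in
  \col_i (if (i <= j)%N then 0
          else if val i == j.+1 then A i j + phase (A i j) * s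
          else A i j).

Definition hh_refl {n : nat} (A : 'M[C]_n) (j : 'I_n) : 'M[C]_n :=
  let w := hh_vec A j in
  let nw := \sum_i `|w i 0| ^+ 2 in
  if nw == 0 then 1%:M else 1%:M - (2 / nw) *: (w *m adjmx w).

(* standard Householder tridiagonalization, columns j = 0 .. n-3:
   returns the pair (Hs, Vs) with Hs = Vs^dag A Vs tridiagonal. *)
Definition householder {n : nat} (A : 'M[C]_n) : 'M[C]_n * 'M[C]_n :=
  foldl (fun BQ (j : 'I_n) =>
           let P := hh_refl BQ.1 j in (adjmx P *m BQ.1 *m P, BQ.2 *m P))
        (A, 1%:M) (filter (fun j : 'I_n => (val j).+2 < n)%N (enum 'I_n)).

(* elementary phase changes making the subdiagonal real positive:
   d_0 = 1, d_(i+1) = d_i * phase(T_(i+1,i)), D = diag(d). *)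
Definition sign_diag {n : nat} (T : 'M[C]_n) : 'M[C]_n :=
  diag_mx (\row_(i < n)
     \prod_(i' : 'I_n | (i' <= i)%N)
        \prod_(j : 'I_n | j.+1 == val i') phase (T i' j)).

Definition Hstar {n : nat} (m : 'I_n) (H : 'M[C]_n) : 'M[C]_n :=
  (householder (adjmx (Vbar m) *m H *m Vbar m)).1.

Definition Heff {n : nat} (m : 'I_n) (H : 'M[C]_n) : 'M[C]_n :=
  let T := Hstar m H in adjmx (sign_diag T) *m T *m sign_diag T.

Definition onsite {n : nat} (m : 'I_n) (H : 'M[C]_n) (i : 'I_n) : C :=
  Heff m H i i.

End Chiral.

From HB Require Import structures.
From mathcomp Require Import all_boot all_order all_algebra perm.
From mathcomp Require Import ring zify.

(* Every Householder reflector of the algorithm fixes the first basis vector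
   e_0, so the whole map is a unitary W with W e_0 = e_m, and the chain
   T := W^† H W anticommutes with the Hermitian matrix G := W^† Γ W, which
   has e_0 as an eigenvector for the eigenvalue ±1.  Since T is tridiagonal
   with nonzero subdiagonal, column k of T G = - G T expresses G e_(k+1)
   through G e_0, ..., G e_k, and by induction G e_k = ±(-1)^k e_k for all k.
   Comparing the (k, k) entries of T G and - G T then gives T_kk = 0.  The
   final phase changes are diagonal and keep the diagonal zero. *)

Set Implicit Arguments. Unset Strict Implicit. Unset Printing Implicit Defensive.
Import Order.TTheory GRing.Theory Num.Theory.
Local Open Scope ring_scope.

Section Preliminaries.
Variable C : numClosedFieldType.

Lemma sumr_delta n (P : pred 'I_n) (F : 'I_n -> C) k :
  \sum_(l | P l) (k == l)%:R * F l = (P k)%:R * F k.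
Proof.
rewrite big_mkcond (bigD1 k) //= eqxx mul1r big1 ?addr0 => [|l /negPf lk].
  by case: (P k); rewrite ?mul1r ?mul0r.
by rewrite eq_sym lk mul0r; case: (P l).
Qed.

Lemma eigen_deltaE n (G : 'M[C]_n) i s :
  G *m delta_mx i 0 = s *: (delta_mx i 0 : 'cV_n) ->
  forall k, G k i = (k == i)%:R * s.
Proof.
by move=> /matrixP hG k; have := hG k 0; rewrite -colE !mxE eqxx andbT mulrC.
Qed.

Lemma adjmxE m n (A : 'M[C]_(m, n)) i j : adjmx A i j = (A j i)^*.
Proof. by rewrite /adjmx !mxE. Qed.

Lemma adjmxK m n (A : 'M[C]_(m, n)) : adjmx (adjmx A) = A.
Proof. by apply/matrixP => i j; rewrite !adjmxE conjCK. Qed.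

Lemma adjmxM m n p (A : 'M[C]_(m, n)) (B : 'M[C]_(n, p)) :
  adjmx (A *m B) = adjmx B *m adjmx A.
Proof. by rewrite /adjmx map_mxM trmx_mul. Qed.

Lemma adjmx1 n : adjmx (1%:M : 'M[C]_n) = 1%:M.
Proof. by rewrite /adjmx map_mx1 trmx1. Qed.

Lemma adjmxZ m n a (A : 'M[C]_(m, n)) : adjmx (a *: A) = a^* *: adjmx A.
Proof. by rewrite /adjmx map_mxZ linearZ. Qed.

Lemma adjmxB m n (A B : 'M[C]_(m, n)) : adjmx (A - B) = adjmx A - adjmx B.
Proof. by rewrite /adjmx map_mxB linearB. Qed.

Lemma adjmx_diag n (d : 'rV[C]_n) :
  adjmx (diag_mx d) = diag_mx (map_mx (@Num.conj C) d).
Proof. by rewrite /adjmx map_diag_mx tr_diag_mx. Qed.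

Definition unitarymx n (U : 'M[C]_n) := U *m adjmx U = 1%:M.

Lemma unitarymxV n (U : 'M[C]_n) : unitarymx U -> adjmx U *m U = 1%:M.
Proof. exact: mulmx1C. Qed.

Lemma unitarymxM n (U V : 'M[C]_n) :
  unitarymx U -> unitarymx V -> unitarymx (U *m V).
Proof.
by move=> hU hV; rewrite /unitarymx adjmxM mulmxA -(mulmxA U) hV mulmx1.
Qed.

Lemma hermitian_conj n (U B : 'M[C]_n) :
  is_hermitian B -> is_hermitian (adjmx U *m B *m U).
Proof. by move=> hB; rewrite /is_hermitian !adjmxM adjmxK hB mulmxA. Qed.

Lemma anticomm_conj n (U A B : 'M[C]_n) : unitarymx U ->
  A *m B = - (B *m A) ->
  (adjmx U *m A *m U) *m (adjmx U *m B *m U) =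
    - ((adjmx U *m B *m U) *m (adjmx U *m A *m U)).
Proof.
move=> hU hAB; have conjM X Y : (adjmx U *m X *m U) *m (adjmx U *m Y *m U) =
    adjmx U *m (X *m Y) *m U by rewrite -!mulmxA (mulmxA U) hU mul1mx.
by rewrite !conjM hAB mulmxN mulNmx.
Qed.

Lemma eigen_conj n (U G : 'M[C]_n) (e f : 'cV[C]_n) s : unitarymx U ->
  U *m e = f -> G *m f = s *: f -> (adjmx U *m G *m U) *m e = s *: e.
Proof.
move=> hU hUe hGf; rewrite -mulmxA hUe -mulmxA hGf -scalemxAr -hUe mulmxA.
by rewrite unitarymxV // mul1mx.
Qed.

End Preliminaries.

Section Tridiagonal.
Variable C : numClosedFieldType.

Lemma anticomm_eigen_diag_eq0 n (T G : 'M[C]_n) i s :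
  is_hermitian G -> T *m G = - (G *m T) -> s != 0 ->
  (forall k, G k i = (k == i)%:R * s) -> T i i = 0.
Proof.
move=> hG hTG s0 hGi.
have sR : s^* = s.
  by have := hGi i; rewrite -{1}hG adjmxE hGi eqxx !mul1r.
have hGi' k : G i k = (i == k)%:R * s.
  by rewrite -hG adjmxE hGi rmorphM /= rmorph_nat sR eq_sym.
have := congr1 (fun M : 'M[C]_n => M i i) hTG; rewrite !mxE.
under eq_bigr do rewrite hGi eq_sym mulrCA.
under [in RHS]eq_bigr do rewrite hGi' -mulrA.
rewrite !sumr_delta /= !mul1r => /eqP; rewrite mulrC -addr_eq0 -mulr2n.
by rewrite mulrn_eq0 /= mulf_eq0 (negbTE s0) => /eqP.
Qed.

Variables (n : nat) (T G : 'M[C]_n.+1) (g : C).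
Hypotheses (hT : is_hermitian T) (hG : is_hermitian G).
Hypothesis hTG : T *m G = - (G *m T).
Hypothesis T_lower : forall k j : 'I_n.+1, (j.+1 < k)%N -> T k j = 0.
Hypothesis T_sub : forall i j : 'I_n.+1, val i = j.+1 -> T i j != 0.
Hypothesis g0 : g != 0.
Hypothesis hG0 : G *m delta_mx ord0 0 = g *: (delta_mx ord0 0 : 'cV_n.+1).

Let sgn (l : nat) := g * (-1) ^+ l.

Let sgnS l : sgn l.+1 = - sgn l.
Proof. by rewrite /sgn exprS mulrCA mulN1r. Qed.

Let sgn_neq0 l : sgn l != 0.
Proof. by rewrite /sgn mulf_neq0 // signr_eq0. Qed.

Let T_upper (k j : 'I_n.+1) : (k.+1 < j)%N -> T k j = 0.
Proof. by move=> kj; rewrite -hT adjmxE T_lower ?conjC0. Qed.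

Let eigen_succ (i i' : 'I_n.+1) : val i' = i.+1 ->
  (forall l : 'I_n.+1, (l <= i)%N -> forall k, G k l = (k == l)%:R * sgn l) ->
  forall k, G k i' = (k == i')%:R * sgn i'.
Proof.
move=> hi' IH k.
have Tii : T i i = 0.
  by apply: (anticomm_eigen_diag_eq0 hG hTG (sgn_neq0 i)); apply: IH.
have GT l : l != i' -> G k l * T l i = (k == l)%:R * (sgn l * T l i).
  move=> li'; have [li|il] := leqP l i; first by rewrite IH // mulrA.
  by rewrite T_lower ?mulr0 // ltn_neqAle il andbT eq_sym -hi'.
have key : G k i' * T i' i = - (T k i * sgn i) - (k != i')%:R * (sgn k * T k i).
  have := congr1 (fun M : 'M[C]_n.+1 => M k i) hTG; rewrite !mxE.
  under eq_bigr do rewrite (IH i) // eq_sym mulrCA.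
  rewrite sumr_delta mul1r (bigD1 i') //=.
  under eq_bigr => l li' do rewrite GT //.
  by rewrite sumr_delta => ->; rewrite opprK addrK.
apply: (mulIf (T_sub hi')); rewrite key.
have [->|ki'] := eqVneq k i'.
  by rewrite /= mul0r subr0 mul1r hi' sgnS mulNr mulrC.
have T_sgn : T k i * sgn i + sgn k * T k i = 0.
  case: (ltngtP k i) => [|ik|/val_inj ->]; last by rewrite Tii mul0r mulr0 addr0.
    rewrite leq_eqVlt => /orP [/eqP <-|ki].
      by rewrite sgnS mulrN [T k i * _]mulrC addNr.
    by rewrite T_upper // mul0r mulr0 addr0.
  by rewrite T_lower ?mul0r ?mulr0 ?addr0 // ltn_neqAle ik andbT -hi' eq_sym.
by rewrite mul1r -opprD T_sgn oppr0 !mul0r.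
Qed.

Lemma tridiag_anticomm_eigen (i : 'I_n.+1) : forall k, G k i = (k == i)%:R * sgn i.
Proof.
suff eigen_upto m (l : 'I_n.+1) :
    (l <= m)%N -> forall k, G k l = (k == l)%:R * sgn l.
  exact: (eigen_upto i).
move: l; elim: m => [|m IH] l.
  rewrite leqn0 => /eqP l0; have -> : l = ord0 by apply: val_inj.
  by move=> k; rewrite (eigen_deltaE hG0) /sgn expr0 mulr1.
rewrite leq_eqVlt ltnS => /orP [/eqP lm|]; last exact: IH.
have mn : (m < n.+1)%N by move: (ltn_ord l); rewrite lm => /ltnW.
exact: (eigen_succ (i := Ordinal mn) lm).
Qed.

Lemma tridiag_anticomm_diag_eq0 (i : 'I_n.+1) : T i i = 0.
Proof.
exact: (anticomm_eigen_diag_eq0 hG hTG (sgn_neq0 i) (tridiag_anticomm_eigen i)).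
Qed.

End Tridiagonal.

Section Reflector.
Variable C : numClosedFieldType.

Definition cdotmx n (u v : 'cV[C]_n) : C := \sum_i (u i 0)^* * v i 0.

Lemma adj_mulmx_cdot n (u v : 'cV[C]_n) : adjmx u *m v = (cdotmx u v)%:M.
Proof.
by apply/matrixP => i j; rewrite !ord1 !mxE; apply: eq_bigr => k _; rewrite adjmxE.
Qed.

Lemma cdotmx_delta n (w : 'cV[C]_n) a : cdotmx w (delta_mx a 0) = (w a 0)^*.
Proof.
rewrite /cdotmx (bigD1 a) //= big1 => [|i ia]; last by rewrite mxE (negbTE ia) mulr0.
by rewrite mxE !eqxx mulr1 addr0.
Qed.

Lemma normsq_cdotmx n (w : 'cV[C]_n) : \sum_i `|w i 0| ^+ 2 = cdotmx w w.
Proof. by apply: eq_bigr => i _; rewrite normCKC. Qed.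

Lemma cdotmx_self_eq0 n (w : 'cV[C]_n) : cdotmx w w = 0 -> w = 0.
Proof.
rewrite -normsq_cdotmx => /psumr_eq0P w0; apply/colP => i; rewrite mxE.
by apply/eqP; rewrite -normr_eq0 -sqrf_eq0 w0 // => ? _; rewrite exprn_ge0.
Qed.

Definition reflector n (w : 'cV[C]_n) : 'M[C]_n :=
  let nw := \sum_i `|w i 0| ^+ 2 in
  if nw == 0 then 1%:M else 1%:M - (2 / nw) *: (w *m adjmx w).

Lemma reflector_hermitian n (w : 'cV[C]_n) : is_hermitian (reflector w).
Proof.
rewrite /is_hermitian /reflector; case: ifP => _; first exact: adjmx1.
rewrite adjmxB adjmx1 adjmxZ adjmxM adjmxK geC0_conj //.
by rewrite divr_ge0 // sumr_ge0 // => i _; rewrite exprn_ge0.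
Qed.

Lemma reflector_mulE n (w b : 'cV[C]_n) :
  reflector w *m b =
    b - (if cdotmx w w == 0 then 0 else 2 / cdotmx w w * cdotmx w b) *: w.
Proof.
rewrite /reflector normsq_cdotmx; case: ifP => _.
  by rewrite mul1mx scale0r subr0.
by rewrite mulmxBl mul1mx -scalemxAl -mulmxA adj_mulmx_cdot mul_mx_scalar scalerA.
Qed.

Lemma reflector_unitary n (w : 'cV[C]_n) : unitarymx (reflector w).
Proof.
rewrite /unitarymx reflector_hermitian /reflector /= normsq_cdotmx.
case: ifP => nw0; first by rewrite mul1mx.
set c := 2 / _; set W := w *m adjmx w.
have WW : W *m W = cdotmx w w *: W.
  by rewrite /W mulmxA -(mulmxA w) adj_mulmx_cdot mul_mx_scalar scalemxAl.
rewrite mulmxBl mul1mx mulmxBr mulmx1 -scalemxAl -scalemxAr WW !scalerA.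
have -> : c * c * cdotmx w w = c + c.
  by rewrite -mulrA divfK ?nw0 // mulr_natr mulr2n.
by rewrite scalerDl opprB addrK subrK.
Qed.

Lemma reflector_mul_orth n (w b : 'cV[C]_n) :
  cdotmx w b = 0 -> reflector w *m b = b.
Proof. by move=> wb; rewrite reflector_mulE wb mulr0 if_same scale0r subr0. Qed.

Lemma reflector_fix n (w : 'cV[C]_n) a :
  w a 0 = 0 -> reflector w *m delta_mx a 0 = delta_mx a (0 : 'I_1).
Proof. by move=> wa; rewrite reflector_mul_orth // cdotmx_delta wa conjC0. Qed.

Lemma reflector_mul_half n (w b : 'cV[C]_n) :
  cdotmx w b *+ 2 = cdotmx w w -> reflector w *m b = b - w.
Proof.
move=> wb; rewrite reflector_mulE.
case: ifP => [/eqP/cdotmx_self_eq0 ->|nw0]; first by rewrite scale0r.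
by rewrite mulrAC mulr_natl wb mulfV ?nw0 // scale1r.
Qed.

End Reflector.

Section HouseholderVector.
Variables (C : numClosedFieldType) (n : nat) (B : 'M[C]_n) (J : 'I_n).

Lemma hh_vec_le (a : 'I_n) : (a <= J)%N -> hh_vec B J a 0 = 0.
Proof. by move=> aJ; rewrite mxE aJ. Qed.

Lemma hh_vec_gt (a : 'I_n) : (J.+1 < a)%N -> hh_vec B J a 0 = B a J.
Proof. by move=> Ja; rewrite mxE leqNgt (ltn_trans _ Ja) // gtn_eqF. Qed.

Lemma phase_polar (x : C) : x = phase x * `|x|.
Proof.
rewrite /phase; case: eqP => [->|/eqP x0]; first by rewrite normr0 mulr0.
by rewrite divfK ?normr_eq0.
Qed.

Lemma phase_unit (x : C) : (phase x)^* * phase x = 1.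
Proof.
rewrite /phase; case: eqP => [_|/eqP x0]; first by rewrite rmorph1 mulr1.
rewrite -normCKC normf_div normr_id divff ?expr1n //.
by rewrite normr_eq0.
Qed.

Lemma hh_vec_cdot : (J.+1 < n)%N ->
  cdotmx (hh_vec B J) (col J B) *+ 2 = cdotmx (hh_vec B J) (hh_vec B J).
Proof.
move=> Jn; pose i1 := Ordinal Jn.
set S := \sum_(i : 'I_n | (J < i)%N) `|B i J| ^+ 2; set x := B i1 J.
set s := sqrtC S; set al := phase x * s.
pose c (a : 'I_n) := if (J < a)%N then `|B a J| ^+ 2 else 0.
have Sc : S = \sum_a c a by rewrite /S big_mkcond.
have pt (a : 'I_n) :
    (hh_vec B J a 0)^* * col J B a 0 = c a + (i1 == a)%:R * (al^* * x) /\
    (hh_vec B J a 0)^* * hh_vec B J a 0 =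
       c a + (i1 == a)%:R * (al^* * x + x^* * al + al^* * al).
  rewrite /hh_vec !mxE /c -/S -/s; case: leqP => [aJ|Ja].
    have -> : (i1 == a) = false by apply/eqP => ia; move: aJ; rewrite -ia /= ltnn.
    by rewrite conjC0 !mul0r addr0.
  have [<-|ia] := eqVneq i1 a; rewrite /= ?eqxx -/x -/al.
    by rewrite normCKC rmorphD mulr1n /=; split; ring.
  have -> : (a == J.+1 :> nat) = false.
    by apply/negbTE; apply: contra ia => /eqP aJ; apply/eqP/val_inj.
  by rewrite /= normCKC !mul0r !addr0.
rewrite /cdotmx; under eq_bigr do rewrite (proj1 (pt _)).
under [in RHS]eq_bigr do rewrite (proj2 (pt _)).
rewrite !big_split /= !sumr_delta -Sc !mulr1n.
have sR : s^* = s.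
  rewrite geC0_conj // sqrtC_ge0 Sc sumr_ge0 // => a _.
  by rewrite /c; case: ifP => _; rewrite ?exprn_ge0.
have rR : `|x|^* = `|x| by rewrite geC0_conj.
have S2 : S = s ^+ 2 by rewrite sqrtCK.
have xE := phase_polar x; have uph := phase_unit x.
(* [al] and [x] have the same phase, so [al^* * x = s * `|x|] is real. *)
rewrite S2 /al; set ph := phase x in xE uph *; set r := `|x| in xE rR *.
rewrite xE !rmorphM /= sR rR; set u := ph^* in uph *; clearbody ph r u.
apply/eqP; rewrite -subr_eq0; apply/eqP.
by transitivity (s ^+ 2 * (1 - u * ph)); [ring | rewrite uph subrr mulr0].
Qed.

End HouseholderVector.

Section Householder.
Variable C : numClosedFieldType.

Lemma hh_reflE n (B : 'M[C]_n) J : hh_refl B J = reflector (hh_vec B J).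
Proof. by []. Qed.

Lemma col_conj_fixed n (P B : 'M[C]_n) a :
  is_hermitian P -> P *m delta_mx a 0 = delta_mx a (0 : 'I_1) ->
  col a (adjmx P *m B *m P) = P *m col a B.
Proof. by move=> hP Pa; rewrite !colE -mulmxA Pa hP mulmxA. Qed.

Lemma hh_conj_subcol_eq0 n (B : 'M[C]_n) (J k : 'I_n) : (J.+1 < k)%N ->
  (adjmx (hh_refl B J) *m B *m hh_refl B J) k J = 0.
Proof.
move=> Jk; have Jn : (J.+1 < n)%N := ltn_trans Jk (ltn_ord k).
have Pb := reflector_mul_half (hh_vec_cdot B Jn).
have PJ := reflector_fix (hh_vec_le B (leqnn J)).
have := col_conj_fixed B (reflector_hermitian _) PJ.
rewrite Pb -hh_reflE => /colP/(_ k); rewrite mxE => ->.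
by rewrite mxE [(- hh_vec _ _) k 0]mxE hh_vec_gt // mxE subrr.
Qed.

Lemma hh_conj_col_prev n (B : 'M[C]_n) (J j : 'I_n) : (j < J)%N ->
  (forall k : 'I_n, (j.+1 < k)%N -> B k j = 0) ->
  col j (adjmx (hh_refl B J) *m B *m hh_refl B J) = col j B.
Proof.
move=> jJ Bj; have Pj := reflector_fix (hh_vec_le B (ltnW jJ)).
rewrite (col_conj_fixed B (reflector_hermitian _) Pj) -hh_reflE.
apply: reflector_mul_orth; rewrite /cdotmx big1 // => a _.
have [aJ|Ja] := leqP a J; first by rewrite hh_vec_le // conjC0 mul0r.
by rewrite [col j B a 0]mxE Bj ?mulr0 // (leq_ltn_trans jJ Ja).
Qed.

Definition hh_step n (BQ : 'M[C]_n * 'M[C]_n) (j : 'I_n) :=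
  let P := hh_refl BQ.1 j in (adjmx P *m BQ.1 *m P, BQ.2 *m P).

Lemma householderE n (A : 'M[C]_n) : householder A =
  foldl (@hh_step n) (A, 1%:M) [seq j <- enum 'I_n | ((val j).+2 < n)%N].
Proof. by []. Qed.

Variables (n : nat) (A : 'M[C]_n.+1).

Definition hh_invariant (J : nat) (BQ : 'M[C]_n.+1 * 'M[C]_n.+1) :=
  [/\ BQ.1 = adjmx BQ.2 *m A *m BQ.2, unitarymx BQ.2,
      BQ.2 *m delta_mx ord0 0 = delta_mx ord0 (0 : 'I_1) &
      forall k j : 'I_n.+1, (j < J)%N -> (j.+1 < k)%N -> BQ.1 k j = 0].

Lemma hh_step_invariant BQ (j : 'I_n.+1) :
  hh_invariant j BQ -> hh_invariant j.+1 (hh_step BQ j).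
Proof.
case: BQ => B Q [/= hB hQ hQ0 hlow]; rewrite /hh_step /=; set P := hh_refl B j.
have hP : is_hermitian P := reflector_hermitian _.
have P0 : P *m delta_mx ord0 0 = delta_mx ord0 (0 : 'I_1).
  exact/reflector_fix/hh_vec_le.
split=> /=.
- by rewrite hB adjmxM !mulmxA.
- exact/unitarymxM/reflector_unitary.
- by rewrite -mulmxA P0.
move=> k j'; rewrite ltnS leq_eqVlt => /orP [/eqP/val_inj -> |j'j] j'k.
  exact: hh_conj_subcol_eq0.
have /colP/(_ k) := hh_conj_col_prev j'j (fun k' => hlow k' j' j'j).
by rewrite mxE [col _ B _ _]mxE => ->; apply: hlow.
Qed.

Lemma hh_fold_invariant (l : seq 'I_n.+1) BQ J :
  hh_invariant J BQ -> map val l = iota J (size l) ->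
  hh_invariant (J + size l) (foldl (@hh_step _) BQ l).
Proof.
elim: l BQ J => [|j l IH] BQ J hI /=; first by rewrite addn0.
case=> hj hl; rewrite addnS -addSn; apply: IH hl.
by rewrite -hj; apply: hh_step_invariant; rewrite hj.
Qed.

Lemma householder_invariant : hh_invariant (n.+1 - 2) (householder A).
Proof.
set L := [seq j <- enum 'I_n.+1 | ((val j).+2 < n.+1)%N].
have L_iota : map val L = iota 0 (n.+1 - 2).
  rewrite -(filter_iota_ltn 0 (leq_subr 2 n.+1)) -val_enum_ord filter_map.
  by congr map; apply: eq_filter => j /=; lia.
have sizeL : size L = (n.+1 - 2)%N by rewrite -(size_map val) L_iota size_iota.
rewrite householderE -/L -sizeL -[size L]add0n.
apply: hh_fold_invariant; last by rewrite L_iota sizeL.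
split=> //=; first by rewrite adjmx1 mulmx1 mul1mx.
- by rewrite /unitarymx adjmx1 mulmx1.
- exact: mul1mx.
Qed.

End Householder.

Section Chiral.
Variable C : numClosedFieldType.

Lemma Vbar_perm n (m : 'I_n.+1) : Vbar C m = perm_mx (tperm ord0 m).
Proof.
apply/matrixP => i j; rewrite !mxE permE /=.
have [->|i0] := eqVneq i ord0; first by rewrite /= eq_sym.
case: eqP => [i0'|_]; first by case/eqP: i0; apply: val_inj.
by case: (i == m); rewrite // eq_sym.
Qed.

Lemma Vbar_unitary n (m : 'I_n.+1) : unitarymx (Vbar C m).
Proof.
have tr_perm (s : 'S_n.+1) : adjmx (perm_mx s : 'M[C]_n.+1) = (perm_mx s)^T.
  by apply/matrixP => i j; rewrite adjmxE !mxE rmorph_nat.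
by rewrite /unitarymx Vbar_perm tr_perm tr_perm_mx -perm_mxM mulgV perm_mx1.
Qed.

Lemma Vbar_delta0 n (m : 'I_n.+1) :
  Vbar C m *m delta_mx ord0 0 = delta_mx m (0 : 'I_1).
Proof.
rewrite Vbar_perm; apply/colP => k.
by rewrite -colE !mxE eqxx andbT (canF_eq (tpermK _ _)) tpermL.
Qed.

Lemma gamma_hermitian n : is_hermitian (gamma C n).
Proof.
apply/matrixP => i j.
rewrite adjmxE !mxE rmorphM rmorph_nat rmorphXn rmorphN1 eq_sym.
by have [->|] := eqVneq j i; rewrite ?mul0r.
Qed.

Lemma gamma_delta n (i : 'I_n) :
  gamma C n *m delta_mx i 0 = (-1) ^+ i *: delta_mx i (0 : 'I_1).
Proof.
apply/colP => k; rewrite -colE !mxE eqxx andbT mulrC.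
by have [->|] := eqVneq k i; rewrite ?mul0r ?mulr0.
Qed.

Lemma diag_conj_diag n (d : 'rV[C]_n) (T : 'M[C]_n) i :
  (adjmx (diag_mx d) *m T *m diag_mx d) i i = (d 0 i)^* * T i i * d 0 i.
Proof. by rewrite adjmx_diag mul_mx_diag mul_diag_mx !mxE. Qed.

End Chiral.

Theorem theorem1 (C : numClosedFieldType) (n : nat) (H : 'M[C]_n) :
  ~~ odd n -> is_hermitian H -> chiral H ->
  forall m : 'I_n,
    (forall i j : 'I_n, val i = j.+1 -> Hstar m H i j != 0) ->
    forall i : 'I_n, onsite m H i = 0.
Proof.
case: n => [|n] in H *; first by move=> _ _ _ [].
move=> _ hH hchi m hsub i.
have [hT hQ hQ0 hlow] := householder_invariant (adjmx (Vbar C m) *m H *m Vbar C m).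
rewrite -/(Hstar m H) in hT hlow; set T := Hstar m H in hT hlow hsub *.
set Q := (householder _).2 in hT hQ hQ0; set W := Vbar C m *m Q.
have hW : unitarymx W by apply: unitarymxM; first exact: Vbar_unitary.
have TW : T = adjmx W *m H *m W by rewrite hT adjmxM !mulmxA.
have Tii : T i i = 0.
  pose G := adjmx W *m gamma C n.+1 *m W.
  apply: (@tridiag_anticomm_diag_eq0 _ _ T G ((-1) ^+ m)).
  - by rewrite TW; apply: hermitian_conj.
  - exact/hermitian_conj/gamma_hermitian.
  - by rewrite TW; apply: anticomm_conj; rewrite // hchi opprK.
  - by move=> k j jk; apply: hlow (jk); move: (ltn_ord k); lia.
  - by move=> a b ab; apply: hsub.
  - by rewrite signr_eq0.
  - apply: eigen_conj (gamma_delta _ _) => //.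
    by rewrite -mulmxA hQ0 Vbar_delta0.
by rewrite /onsite /Heff diag_conj_diag Tii mulr0 mul0r.
Qed.
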